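(* For $n \in \mathbb{N}_0$ let $\lambda(n)$ denote the number of leading $1$s in the binary expansion of $n$ (so $\lambda(0)=0$, and e.g. $\lambda(123)=\lambda([1111011]_2)=4$). Define $f\colon\mathbb{N}_0\to\{0,1\}$ by $f(n)=1$ if $\lambda(n)$ is prime and $f(n)=0$ otherwise. Then $f$ is asymptotically $2$-automatic but there is no $2$-automatic sequence $\tilde f\colon\mathbb{N}_0\to\{0,1\}$ with $f\simeq\tilde f$.
   Context: $\mathbb{N}_0=\{0,1,2,\dots\}$. A property holds for almost all $n\in\mathbb{N}_0$ if the set of $n$ where it fails has upper density $\limsup_{N\to\infty}|\cdot\cap\{0,\dots,N-1\}|/N$ equal to $0$. Sequences $f,g$ are asymptotically equal, $f\simeq g$, if $f(n)=g(n)$ for almost all $n$. The $k$-kernel of $f$ is $\mathcal{N}_k(f) = \{ n \mapsto f(k^\alpha n + r) : \alpha, r \in \mathbb{N}_0,\ r < k^\alpha\}$; $f$ is $k$-automatic if $\mathcal{N}_k(f)$ is finite, and asymptotically $k$-automatic if $\mathcal{N}_k(f)/{\simeq}$ is finite. *)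

From Stdlib Require List.
From mathcomp Require Import all_boot all_order all_algebra.
Set Implicit Arguments. Unset Strict Implicit. Unset Printing Implicit Defensive.
Import Order.TTheory GRing.Theory Num.Theory.

Definition upper_density_zero (S : pred nat) : Prop :=
  forall eps : rat, (0 < eps)%R ->
    exists N0 : nat, forall N : nat, (N0 <= N)%N ->
      ((count S (iota 0 N))%:R <= eps * N%:R)%R.

Definition asym_eq (T : eqType) (f g : nat -> T) : Prop :=
  upper_density_zero (fun n => f n != g n).

Definition in_kernel (T : Type) (k : nat) (f h : nat -> T) : Prop :=
  exists alpha r : nat, (r < k ^ alpha)%N /\ h = (fun n => f (k ^ alpha * n + r)).

(* N_k(f) is finite: listed (up to duplication) by a finite list. *)
Definition automatic (T : Type) (k : nat) (f : nat -> T) : Prop :=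
  exists s : seq (nat -> T),
    (forall h, List.In h s -> in_kernel k f h) /\
    (forall h, in_kernel k f h -> List.In h s).

(* N_k(f)/≃ is finite: finitely many kernel elements represent every
   ≃-class of the kernel. *)
Definition asym_automatic (T : eqType) (k : nat) (f : nat -> T) : Prop :=
  exists s : seq (nat -> T),
    (forall h, List.In h s -> in_kernel k f h) /\
    (forall h, in_kernel k f h -> exists2 g, List.In g s & asym_eq h g).

(* binary digits, least significant first (fuel-based; fuel n suffices) *)
Fixpoint bits_aux (fuel n : nat) : seq bool :=
  match fuel with
  | 0 => [::]
  | fuel'.+1 => if n is 0 then [::] else odd n :: bits_aux fuel' n./2
  end.

Definition binary (n : nat) : seq bool := rev (bits_aux n n).

Definition lead_ones (n : nat) : nat := find negb (binary n).

Definition f_prime_lead (n : nat) : nat := if prime (lead_ones n) then 1 else 0.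

From mathcomp Require Import all_boot all_order all_algebra.
From mathcomp Require Import zify.
From Stdlib Require Import ClassicalEpsilon FunctionalExtensionality.
Set Implicit Arguments. Unset Strict Implicit. Unset Printing Implicit Defensive.
Import Order.TTheory GRing.Theory Num.Theory.

(* A kernel element n |-> f (2^a n + r) has the same leading ones as f n unless the
   binary expansion of n consists of ones only, i.e. n = 2^k - 1; there are
   O(log N) such n below N, so every kernel element is asymptotically equal to f.
   Conversely, if an automatic g agreed with f almost everywhere, averaging over the
   residues r < 2^a yields a, r with g (2^(a+1) (2^y - 1) + r) = [y prime] for all
   y <= L, with L fixed in advance.  Two of the kernel elements
   n |-> g (2^(a+1) (2^i n + 2^i - 1) + r), i <= |kernel|, must coincide, which makes
   y |-> [y prime] periodic from some i on with a period d <= |kernel|; a prime m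
   and m (d + 1) contradict this. *)

Lemma half_succ_leq n : n.+1./2 <= n.
Proof. rewrite leq_half_double -addnn; lia. Qed.

Lemma bits_aux_fuel f1 f2 n : n <= f1 -> n <= f2 -> bits_aux f1 n = bits_aux f2 n.
Proof.
elim: f1 f2 n => [|f1 IH] [|f2] [|n] //= h1 h2.
by congr (_ :: _); apply: IH; apply: leq_trans (half_succ_leq n) _.
Qed.

Lemma bits_auxS fuel n : 0 < n -> bits_aux fuel.+1 n = odd n :: bits_aux fuel n./2.
Proof. by case: n. Qed.

Lemma binary_double_add n (b : bool) : 0 < n -> binary (n.*2 + b) = rcons (binary n) b.
Proof.
move=> n_gt0; rewrite /binary.
have fuelE : n.*2 + b = (n.*2 + b).-1.+1 by rewrite -addnn; lia.
rewrite {1}fuelE {fuelE} bits_auxS; last by rewrite addn_gt0 double_gt0 n_gt0.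
rewrite addnC oddD odd_double addbF half_bit_double rev_cons.
congr (rcons (rev _) _); last by case: b.
by apply: bits_aux_fuel => //; rewrite -addnn; lia.
Qed.

Lemma binary_mulpow2_add a n r : 0 < n -> r < 2 ^ a ->
  prefix (binary n) (binary (2 ^ a * n + r)).
Proof.
move=> n_gt0; elim: a r => [|a IH] r.
  by rewrite expn0 ltnS leqn0 mul1n => /eqP ->; rewrite addn0 prefix_refl.
move=> r_lt; have r2_lt : r./2 < 2 ^ a by rewrite ltn_half_double -muln2 -expnSr.
have -> : 2 ^ a.+1 * n + r = (2 ^ a * n + r./2).*2 + odd r.
  by rewrite -{3}(odd_double_half r) expnS doubleD -mul2n mulnA; lia.
have pos : 0 < 2 ^ a * n by rewrite muln_gt0 expn_gt0.
rewrite binary_double_add; last by rewrite addn_gt0 pos.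
exact: prefix_trans (IH _ r2_lt) (prefix_rcons _ _).
Qed.

Lemma binary_pow2_sub1 y : binary (2 ^ y - 1) = nseq y true.
Proof.
elim: y => [|y IH] //; case: y IH => [|y] IH //.
have pos : 0 < 2 ^ y.+1 - 1 by have := ltn_expl y.+1 (ltnSn 1); lia.
have -> : 2 ^ y.+2 - 1 = (2 ^ y.+1 - 1).*2 + true by rewrite (expnS 2 y.+1) -addnn; lia.
by rewrite binary_double_add // IH -cats1 -[[:: true]]/(nseq 1 true) -nseqD addn1.
Qed.

Lemma all_binary_pow2_sub1 n : all id (binary n) -> n = 2 ^ size (binary n) - 1.
Proof.
elim/ltn_ind: n => -[|[|n]] IH //; set m := n.+2./2.
have m_lt : m < n.+2 := half_succ_leq n.+1.
have -> : n.+2 = m.*2 + odd n.+2 by rewrite addnC odd_double_half.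
rewrite binary_double_add // all_rcons size_rcons => /andP [odd_n ones].
rewrite {1}(IH m m_lt ones) expnS; move: odd_n; case: (odd _) => // _.
have := ltn_expl (size (binary m)) (ltnSn 1); rewrite -addnn; lia.
Qed.

Lemma lead_ones_mulpow2_add a n r : has negb (binary n) -> r < 2 ^ a ->
  lead_ones (2 ^ a * n + r) = lead_ones n.
Proof.
move=> zero_n r_lt; have n_gt0 : 0 < n by case: n zero_n.
rewrite /lead_ones; have /prefixP [t ->] := binary_mulpow2_add n_gt0 r_lt.
by rewrite find_cat zero_n.
Qed.

Lemma lead_ones_pow2_sub1_shift a y r : 0 < y -> r < 2 ^ a ->
  lead_ones (2 ^ a.+1 * (2 ^ y - 1) + r) = y.
Proof.
move=> y_gt0 r_lt; have pos : 0 < 2 ^ y - 1.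
  by case: y y_gt0 => // y _; have := ltn_expl y.+1 (ltnSn 1); lia.
have binE : binary ((2 ^ y - 1).*2) = rcons (nseq y true) false.
  by rewrite -[_.*2]addn0 (binary_double_add false pos) binary_pow2_sub1.
rewrite expnSr -mulnA mul2n lead_ones_mulpow2_add // ?binE; last first.
  by rewrite has_rcons.
by rewrite /lead_ones binE -cats1 find_cat has_nseq andbF size_nseq addn0.
Qed.

Lemma upper_density_zeroP (S : pred nat) :
  upper_density_zero S <->
  forall M, exists N0, forall N, N0 <= N -> M * count S (iota 0 N) <= N.
Proof.
split=> [S0 [|M] | bounded eps eps_gt0]; first by exists 0.
  have [N0 N0_bound] := S0 (M.+1%:R^-1)%R (ltac:(by rewrite invr_gt0 ltr0n)).
  exists N0 => N /N0_bound.
  by rewrite ler_pdivlMl ?ltr0Sn // -natrM ler_nat.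
pose M := Num.Def.archi_bound eps^-1.
have eps_M : (1 <= eps * M%:R)%R.
  have inv_ge0 : (0 <= eps^-1)%R by rewrite invr_ge0 ltW.
  have := archi_boundP inv_ge0.
  by rewrite -(ltr_pM2l eps_gt0) mulfV ?gt_eqF // => /ltW.
have [N0 N0_bound] := bounded M; exists N0 => N /N0_bound.
rewrite -(ler_nat rat) natrM => count_M.
apply: le_trans (ler_wpM2l (ltW eps_gt0) count_M).
by rewrite mulrA ler_peMl.
Qed.

Lemma upper_density_zero_sub (S T : pred nat) :
  subpred S T -> upper_density_zero T -> upper_density_zero S.
Proof.
move=> ST T0 eps eps_gt0; have [N0 N0_bound] := T0 eps eps_gt0.
by exists N0 => N /N0_bound; apply: le_trans; rewrite ler_nat sub_count.
Qed.

Lemma exp2_dominates_linear M : exists T0, forall t, T0 <= t -> M * t.+1 <= 2 ^ t.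
Proof.
have M_lt := ltn_expl M (ltnSn 1).
exists (M.*2 + 4); elim=> [|t IH]; first by rewrite addnS.
rewrite leq_eqVlt ltnS => /predU1P [<- | t_ge].
  rewrite -addnn !expnD; nia.
have : 2 ^ M <= 2 ^ t by rewrite leq_pexp2l //; lia.
have := IH t_ge; rewrite expnS; lia.
Qed.

Lemma upper_density_zero_log2 (S : pred nat) :
  (forall N, count S (iota 0 N) <= (trunc_log 2 N).+1) -> upper_density_zero S.
Proof.
move=> S_log; apply/upper_density_zeroP => M.
have [T0 T0_dom] := exp2_dominates_linear M.
exists (2 ^ T0) => N N_ge; have N_gt0 : 0 < N := leq_trans (expn_gt0 2 T0) N_ge.
apply: leq_trans (leq_mul (leqnn M) (S_log N)) _.
exact: leq_trans (T0_dom _ (trunc_log_max (ltnSn 1) N_ge)) (trunc_logP (ltnSn 1) N_gt0).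
Qed.

Lemma count_binary_ones N :
  count (fun n => all id (binary n)) (iota 0 N) <= (trunc_log 2 N).+1.
Proof.
set L := (trunc_log 2 N).+1; rewrite -size_filter.
have -> : L = size [seq 2 ^ k - 1 | k <- iota 0 L] by rewrite size_map size_iota.
apply: uniq_leq_size; first exact: filter_uniq (iota_uniq 0 N).
move=> n; rewrite mem_filter mem_iota add0n => /andP [ones n_lt].
apply/mapP; exists (size (binary n)); last exact: all_binary_pow2_sub1.
rewrite mem_iota add0n ltnS; apply: trunc_log_max => //.
move: n_lt; rewrite {2}(all_binary_pow2_sub1 ones).
have := ltn_expl (size (binary n)) (ltnSn 1); lia.
Qed.

Lemma in_kernel_refl (T : Type) k (f : nat -> T) : in_kernel k f f.
Proof.
exists 0, 0; split => //.
by apply: functional_extensionality => n; rewrite expn0 mul1n addn0.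
Qed.

Lemma in_kernel_comp (T : Type) k (f h : nat -> T) b r :
  in_kernel k f h -> r < k ^ b -> in_kernel k f (fun n => h (k ^ b * n + r)).
Proof.
move=> [a [r0 [r0_lt ->]]] r_lt; exists (a + b), (k ^ a * r + r0); split.
  have := leq_mul (leqnn (k ^ a)) r_lt; rewrite expnD mulnS; lia.
by apply: functional_extensionality => n; rewrite expnD mulnDr mulnA addnA.
Qed.

Lemma f_prime_lead_kernel_asym_eq h :
  in_kernel 2 f_prime_lead h -> asym_eq h f_prime_lead.
Proof.
move=> [a [r [r_lt ->]]].
apply: (upper_density_zero_sub _ (upper_density_zero_log2 count_binary_ones)) => n /=.
apply: contraR; rewrite -has_predC => zero_n.
by rewrite /f_prime_lead lead_ones_mulpow2_add ?negbK.
Qed.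

Lemma asym_automatic_f_prime_lead : asym_automatic 2 f_prime_lead.
Proof.
exists [:: f_prime_lead]; split=> [h [<- | []] | h h_ker]; first exact: in_kernel_refl.
by exists f_prime_lead; [left | exact: f_prime_lead_kernel_asym_eq].
Qed.

Lemma count_has_leq (I : eqType) (T : Type) (P : I -> pred T) (xs : seq I) (s : seq T) B :
  {in xs, forall i, count (P i) s <= B} ->
  count (fun x => has (P^~ x) xs) s <= size xs * B.
Proof.
elim: xs => [|i xs IH] P_le /=; first by rewrite count_pred0.
rewrite mulSn; apply: leq_trans (leq_add (P_le i (mem_head _ _)) (IH _)); last first.
  by move=> j j_in; apply: P_le; rewrite inE j_in orbT.
by rewrite -count_predUI leq_addr.
Qed.

Lemma count_iota_addn (E : pred nat) c R N : c + R <= N ->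
  count (fun r => E (c + r)) (iota 0 R) <= count E (iota 0 N).
Proof.
move=> cR_le; rewrite -(count_map (addn c)) -iotaDl addn0.
rewrite -(subnKC cR_le) iotaD count_cat -{1}[c]add0n iotaD count_cat /=; lia.
Qed.

Lemma upper_density_zero_avoid k (E : pred nat) (ns : seq nat) :
  1 < k -> upper_density_zero E ->
  exists a r, r < k ^ a /\ {in ns, forall n, ~~ E (k ^ a * n + r)}.
Proof.
move=> k_gt1 /upper_density_zeroP E0; set B := (\max_(n <- ns) n).+1.
have [a a_bound] := E0 ((size ns).+1 * B); have ka_gt0 : 0 < k ^ a by rewrite expn_gt0 ltnW.
set c := count E (iota 0 (k ^ a * B)).
have c_le : (size ns).+1 * c <= k ^ a.
  have : a <= k ^ a * B by rewrite (leq_trans (ltnW (ltn_expl a k_gt1))) ?leq_pmulr.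
  by move/a_bound; rewrite mulnAC leq_pmul2r.
(* Each n in ns rules out at most c residues r, and (size ns).+1 * c <= k ^ a. *)
have bad_lt : count (fun r => has (fun n => E (k ^ a * n + r)) ns) (iota 0 (k ^ a)) < k ^ a.
  apply: leq_ltn_trans (count_has_leq (B := c) _) _ => [n n_in|].
    by apply: count_iota_addn; rewrite addnC -mulnS leq_mul2l ltnS leq_bigmax_seq ?orbT.
  move: c_le; rewrite mulSn; case: c => [|c'] c_le; first by rewrite muln0.
  by apply: leq_trans c_le; rewrite addSn ltnS leq_addl.
have : has (predC (fun r => has (fun n => E (k ^ a * n + r)) ns)) (iota 0 (k ^ a)).
  by rewrite has_predC all_count size_iota neq_ltn bad_lt.
case/hasP=> r; rewrite mem_iota => /andP [_ r_lt] /hasPn r_good.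
by exists a, r.
Qed.

Lemma In_nth (X : Type) (d x : X) (s : seq X) :
  List.In x s -> exists2 k, k < size s & nth d s k = x.
Proof.
elim: s => [|y s IH] //= [-> | /IH [k k_lt <-]]; first by exists 0.
by exists k.+1.
Qed.

Lemma seq_pigeonhole (X : Type) (s : seq X) (u : nat -> X) :
  (forall i, i <= size s -> List.In (u i) s) ->
  exists i j, i < j <= size s /\ u i = u j.
Proof.
move=> u_in.
have idx_spec (i : 'I_(size s).+1) : {k : 'I_(size s) | nth (u 0) s k = u i}.
  apply: constructive_indefinite_description.
  have [k k_lt nth_k] := In_nth (u 0) (u_in i (ltn_ord i)).
  by exists (Ordinal k_lt).
pose idx i := sval (idx_spec i).
have /injectivePn [i [j i_neq_j idx_eq]] : ~~ injectiveb idx.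
  by apply/injectiveP => /leq_card; rewrite !card_ord ltnn.
have u_eq : u i = u j.
  by rewrite -(svalP (idx_spec i)) -(svalP (idx_spec j)) -/(idx i) -/(idx j) idx_eq.
have i_le := ltn_ord i; have j_le := ltn_ord j; rewrite ltnS in i_le j_le.
case: (ltngtP i j) => [i_lt | j_lt | ij_eq]; first by exists i, j; rewrite i_lt.
  by exists j, i; rewrite j_lt.
by move: i_neq_j; rewrite -(inj_eq val_inj) /= ij_eq eqxx.
Qed.

Lemma eventually_periodic (T : Type) (q : nat -> T) i j : i <= j ->
  (forall x, q (i + x) = q (j + x)) ->
  forall t x, q (i + x) = q (i + x + t * (j - i)).
Proof.
move=> i_le q_shift; elim=> [|t IH] x; first by rewrite addn0.
by rewrite IH -addnA q_shift mulSn; congr q; lia.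
Qed.

Lemma primeN_mul m n : 1 < m -> 1 < n -> ~~ prime (m * n).
Proof.
move=> m_gt1 n_gt1; apply/primeP => -[_ /(_ m (dvdn_mulr _ (dvdnn m)))].
by case/orP => /eqP; nia.
Qed.

Lemma expn_sub1_mul_add k i x : 0 < k ->
  k ^ i * (k ^ x - 1) + (k ^ i - 1) = k ^ (i + x) - 1.
Proof.
move=> k_gt0; have := expn_gt0 k i; have := expn_gt0 k x.
rewrite k_gt0 expnD; nia.
Qed.

Lemma not_asym_eq_f_prime_lead_automatic g :
  automatic 2 g -> ~ asym_eq f_prime_lead g.
Proof.
move=> [s [_ s_cover]] fg.
have [m m_gt m_prime] := prime_above (size s); have m_gt1 := prime_gt1 m_prime.
(* L is large enough to contain m (d + 1) for every candidate period d <= size s. *)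
set L := m * (size s).+1.
have [a [r [r_lt r_good]]] :=
  upper_density_zero_avoid [seq (2 ^ y - 1).*2 | y <- iota 1 L] (ltnSn 1) fg.
pose h n := g (2 ^ a.+1 * n + r).
pose q y := h (2 ^ y - 1).
have q_prime y : 0 < y <= L -> q y = if prime y then 1 else 0.
  case/andP=> y_gt0 y_le; rewrite /q /h.
  have /r_good : (2 ^ y - 1).*2 \in [seq (2 ^ y - 1).*2 | y <- iota 1 L].
    by apply: map_f; rewrite mem_iota; lia.
  rewrite negbK -mul2n mulnA -expnSr => /eqP <-.
  by rewrite /f_prime_lead lead_ones_pow2_sub1_shift.
have h_ker : in_kernel 2 g h.
  by exists a.+1, r; split=> //; rewrite expnS; lia.
pose u i n := h (2 ^ i * n + (2 ^ i - 1)).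
have u_in i : List.In (u i) s.
  by apply/s_cover/in_kernel_comp => //; rewrite subn1 prednK ?expn_gt0.
have [i [j [/andP [i_lt j_le] u_eq]]] := seq_pigeonhole (fun i _ => u_in i).
have q_shift x : q (i + x) = q (j + x).
  by have := congr1 (fun F => F (2 ^ x - 1)) u_eq; rewrite /u /= !expn_sub1_mul_add.
have := eventually_periodic (ltnW i_lt) q_shift m (m - i).
rewrite subnKC; last by lia.
rewrite -mulnS !q_prime ?m_prime ?(negbTE (primeN_mul _ _)) //; nia.
Qed.

Theorem proposition3p1 :
  asym_automatic 2 f_prime_lead /\
  ~ (exists g : nat -> nat,
       (forall n, g n < 2) /\ automatic 2 g /\ asym_eq f_prime_lead g).
Proof.
split; first exact: asym_automatic_f_prime_lead.
by move=> [g [_ [g_automatic fg]]]; apply: not_asym_eq_f_prime_lead_automatic fg.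
Qed.
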